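(* Let $V$ be a finite set and let $\Pi=\{\mathcal{P}_1,\mathcal{P}_2,\mathcal{P}_3\}$ be a homogeneous $3$-scheme on $V$. Then $(V,\mathcal{P}_2\cup\{1\})$ is an association scheme, where $1=\{(v,v)\mid v\in V\}$ is the identity relation.
   Context: For a finite set $V$ and $s\geq1$, let $V^{(s)}$ be the set of $s$-tuples of pairwise distinct elements of $V$. For $s>1$ and $1\leq i\leq s$, $\pi^s_i:V^{(s)}\to V^{(s-1)}$ deletes the $i$-th coordinate. $\mathrm{Symm}_s$ acts on $V^{(s)}$ by $(v_1,\dots,v_s)^\tau=(v_{1^\tau},\dots,v_{s^\tau})$. An $m$-collection on $V$ is a set $\Pi=\{\mathcal{P}_1,\dots,\mathcal{P}_m\}$ where $\mathcal{P}_s$ is a partition of $V^{(s)}$; its classes are called colors. It is an $m$-scheme if for every $1<s\leq m$: (compatibility) whenever $\bar u,\bar v$ lie in the same color of $\mathcal{P}_s$, for every $i$ the tuples $\pi^s_i(\bar u),\pi^s_i(\bar v)$ lie in the same color of $\mathcal{P}_{s-1}$; (regularity) whenever $\bar u,\bar v$ lie in the same color of $\mathcal{P}_{s-1}$, for every $1\leq i\leq s$ and every $P\in\mathcal{P}_s$, $\#\{\bar u'\in P\mid \pi^s_i(\bar u')=\bar u\}=\#\{\bar v'\in P\mid\pi^s_i(\bar v')=\bar v\}$; (invariance) for every $P\in\mathcal{P}_s$ and $\tau\in\mathrm{Symm}_s$, $P^\tau:=\{\bar v^\tau\mid \bar v\in P\}\in\mathcal{P}_s$. It is homogeneous if $|\mathcal{P}_1|=1$.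 An association scheme is a pair $(X,G)$ with $X$ finite and $G$ a partition of $X\times X$ containing the identity relation $1$, closed under $g\mapsto g^*:=\{(y,x)\mid(x,y)\in g\}$, and such that for all $f,g,h\in G$ the number $\#\{\gamma\in X\mid(\alpha,\gamma)\in f,(\gamma,\beta)\in g\}$ is the same for all $(\alpha,\beta)\in h$. *)

From mathcomp Require Import all_boot all_fingroup.
Set Implicit Arguments. Unset Strict Implicit. Unset Printing Implicit Defensive.

Section Schemes.
Variable V : finType.

Definition dtuples (s : nat) : {set s.-tuple V} := [set t : s.-tuple V | uniq t].

Definition deltup (k : nat) (t : k.+1.-tuple V) (i : 'I_k.+1) : k.-tuple V :=
  [tuple tnth t (lift i j) | j < k].

Definition permtup (s : nat) (tau : 'S_s) (t : s.-tuple V) : s.-tuple V :=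
  [tuple tnth t (tau j) | j < s].

Definition same_color (T : finType) (Ps : {set {set T}}) (x y : T) : bool :=
  [exists Q in Ps, (x \in Q) && (y \in Q)].

Definition is_collection (m : nat) (P : forall s, {set {set s.-tuple V}}) : Prop :=
  forall s, 1 <= s <= m -> partition (P s) (dtuples s).

Definition compatibility (k : nat) (P : forall s, {set {set s.-tuple V}}) : Prop :=
  forall (u v : k.+1.-tuple V), same_color (P k.+1) u v ->
    forall i : 'I_k.+1, same_color (P k) (deltup u i) (deltup v i).

Definition regularity (k : nat) (P : forall s, {set {set s.-tuple V}}) : Prop :=
  forall (u v : k.-tuple V), same_color (P k) u v ->
    forall (i : 'I_k.+1) (C : {set k.+1.-tuple V}), C \in P k.+1 ->
      #|[set u' in C | deltup u' i == u]| = #|[set v' in C | deltup v' i == v]|.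

Definition invariance (s : nat) (P : forall s, {set {set s.-tuple V}}) : Prop :=
  forall (C : {set s.-tuple V}), C \in P s ->
    forall tau : 'S_s, [set permtup tau t | t in C] \in P s.

(* m-scheme: conditions for every 1 < s <= m, written s = k.+1 *)
Definition is_scheme (m : nat) (P : forall s, {set {set s.-tuple V}}) : Prop :=
  is_collection m P /\
  forall k, 1 <= k -> k.+1 <= m ->
    [/\ compatibility k P, regularity k P & invariance k.+1 P].

Definition homogeneous (P : forall s, {set {set s.-tuple V}}) : Prop :=
  #|P 1| = 1.

Definition rel_of_color (C : {set 2.-tuple V}) : {set V * V} :=
  [set (tnth t ord0, tnth t ord_max) | t in C].

End Schemes.

Section AssocScheme.
Variable X : finType.

Definition id_rel : {set X * X} := [set xy | xy.1 == xy.2].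

Definition transpose_rel (g : {set X * X}) : {set X * X} :=
  [set xy | (xy.2, xy.1) \in g].

Definition is_association_scheme (G : {set {set X * X}}) : Prop :=
  [/\ partition G [set: X * X],
      id_rel \in G,
      (forall g, g \in G -> transpose_rel g \in G) &
      (forall f g h, f \in G -> g \in G -> h \in G ->
         forall a b a' b', (a, b) \in h -> (a', b') \in h ->
           #|[set c | ((a, c) \in f) && ((c, b) \in g)]| =
           #|[set c | ((a', c) \in f) && ((c, b') \in g)]|)].
End AssocScheme.

From mathcomp Require Import all_boot all_fingroup.
Set Implicit Arguments. Unset Strict Implicit. Unset Printing Implicit Defensive.

(* The identity relation together with the colors of P_2 partition V x V, and
   the colors are closed under transposition by invariance of P_2. For the
   intersection numbers of colors f, g over a pair (a, b) in a relation h: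
   - if h is the identity (a = b), the midpoints c are counted by the pairs
     (a, c) in f whose swap lies in g, i.e. by the fiber over (a) of f
     restricted to the transpose of g, itself a color of P_2; this is independent of a by regularity
     from P_1 to P_2, as P_1 has a single color;
   - otherwise the midpoints c correspond to the triples (a, c, b), which
     split along the colors T of P_3; by compatibility the conditions
     (a, c) in f and (c, b) in g are constant on each T, so regularity from
     P_2 to P_3 shows that each summand depends only on the color of (a, b). *)

Section Partitions.
Variable T : finType.
Implicit Types (P : {set {set T}}) (A B C D S : {set T}).

Lemma partition_block_eq P D A B x :
  partition P D -> A \in P -> B \in P -> x \in A -> x \in B -> A = B.
Proof.
move=> pP PA PB xA xB; have tP := partition_trivIset pP.
by rewrite -(def_pblock tP PA xA) (def_pblock tP PB xB).
Qed.

Lemma same_color_in P C x y :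
  C \in P -> x \in C -> y \in C -> same_color P x y.
Proof. by move=> PC xC yC; apply/existsP; exists C; rewrite PC xC yC. Qed.

Lemma same_color_mem P D C x y :
  partition P D -> C \in P -> same_color P x y -> (x \in C) = (y \in C).
Proof.
move=> pP PC /existsP[Q /and3P[PQ xQ yQ]].
by apply/idP/idP => [/(partition_block_eq pP PC PQ)|/(partition_block_eq pP PC PQ)]
  => [/(_ xQ)|/(_ yQ)] ->.
Qed.

Lemma card_partition_setI P D S :
  partition P D -> S \subset D -> #|S| = \sum_(B in P) #|S :&: B|.
Proof.
move=> pP sSD; have tP := partition_trivIset pP; have cP := cover_partition pP.
rewrite -sum1_card (partition_big (pblock P) (mem P)) /=; last first.
  by move=> t tS; apply: pblock_mem; rewrite cP (subsetP sSD).
apply: eq_bigr => B PB; rewrite -sum1_card; apply: eq_bigl => t.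
rewrite inE; case tS: (t \in S) => //=.
apply/eqP/idP => [<-|tB]; first by rewrite mem_pblock cP (subsetP sSD).
exact: def_pblock.
Qed.

Lemma card_restr_const A (q q' p : pred T) :
  {in A &, forall t t', p t = p t'} ->
  #|[set t in A | q t]| = #|[set t in A | q' t]| ->
  #|[set t in A | q t && p t]| = #|[set t in A | q' t && p t]|.
Proof.
move=> p_const eq_q.
have pE t : t \in A -> p t = [exists s in A, p s].
  move=> tA; apply/idP/existsP => [pt|[s /andP[sA ps]]]; first by exists t; rewrite tA.
  by rewrite (p_const t s).
have restrE (r : pred T) :
    [set t in A | r t && p t] = if [exists s in A, p s] then [set t in A | r t] else set0.
  apply/setP => t; case: ifP => pA; rewrite !inE; case tA: (t \in A) => //=;
  by rewrite (pE t tA) pA ?andbT ?andbF.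
by rewrite !restrE; case: ifP => // _; apply: eq_q.
Qed.

End Partitions.

Section IdentityComposition.
Variable X : finType.

Lemma card_comp_id_rel_l (g : {set X * X}) a b :
  #|[set c | ((a, c) \in id_rel X) && ((c, b) \in g)]| = ((a, b) \in g).
Proof.
case gab: ((a, b) \in g); rewrite /=; [rewrite -(cards1 a) | rewrite -(cards0 X)];
  apply: eq_card => c; rewrite !inE /=.
  by apply/andP/eqP => [[/eqP <-]|->].
by apply/andP => -[/eqP <-]; rewrite gab.
Qed.

Lemma card_comp_id_rel_r (f : {set X * X}) a b :
  #|[set c | ((a, c) \in f) && ((c, b) \in id_rel X)]| = ((a, b) \in f).
Proof.
case fab: ((a, b) \in f); rewrite /=; [rewrite -(cards1 b) | rewrite -(cards0 X)];
  apply: eq_card => c; rewrite !inE /=.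
  by apply/andP/eqP => [[_ /eqP]|->].
by apply/andP => -[+ /eqP cb]; rewrite cb fab.
Qed.

End IdentityComposition.
Section Tuples.
Variable V : finType.

Definition tup2 (x y : V) : 2.-tuple V := [tuple x; y].
Definition tup3 (x y z : V) : 3.-tuple V := [tuple x; y; z].

Lemma tup2E (u : 2.-tuple V) : u = tup2 (tnth u ord0) (tnth u ord_max).
Proof. by case: u => -[|x [|y []]] // u2; apply: val_inj. Qed.

Lemma tup3P (u : 3.-tuple V) : exists x y z, u = tup3 x y z.
Proof. by case: u => -[|x [|y [|z []]]] // u3; exists x, y, z; apply: val_inj. Qed.

Lemma tuple1_inj (x y : V) : [tuple x] = [tuple y] -> x = y.
Proof. by move/(congr1 val) => [->]. Qed.

Lemma tup2_inj x y x' y' : tup2 x y = tup2 x' y' -> x = x' /\ y = y'.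
Proof. by move/(congr1 val) => [-> ->]. Qed.

Lemma tup2_dtuple x y : (tup2 x y \in dtuples V 2) = (x != y).
Proof. by rewrite inE /= inE andbT. Qed.

Lemma tup3_uniq x y z : uniq (tup3 x y z) = [&& x != y, x != z & y != z].
Proof. by rewrite /= !inE negb_or andbT -andbA. Qed.

Lemma deltup3_0 x y z : deltup (tup3 x y z) ord0 = tup2 y z.
Proof. by apply: eq_from_tnth => -[[|[|]] ?] //; rewrite tnth_mktuple. Qed.

Lemma deltup3_1 x y z : deltup (tup3 x y z) (inord 1) = tup2 x z.
Proof.
by apply: eq_from_tnth => -[[|[|]] ?] //; rewrite tnth_mktuple !(tnth_nth x) /= /bump inordK.
Qed.

Lemma deltup3_2 x y z : deltup (tup3 x y z) ord_max = tup2 x y.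
Proof. by apply: eq_from_tnth => -[[|[|]] ?] //; rewrite tnth_mktuple. Qed.

Lemma deltup2_1 x y : deltup (tup2 x y) ord_max = [tuple x].
Proof. by apply: eq_from_tnth => -[[|] ?] //; rewrite tnth_mktuple. Qed.

Definition swap2 : 'S_2 := tperm ord0 ord_max.

Lemma permtup_swap2 x y : permtup swap2 (tup2 x y) = tup2 y x.
Proof. by apply: eq_from_tnth => -[[|[|]] ?] //; rewrite tnth_mktuple permE. Qed.

Lemma mem_permtup_swap2 (C : {set 2.-tuple V}) x y :
  (tup2 x y \in permtup swap2 @: C) = (tup2 y x \in C).
Proof.
apply/imsetP/idP => [[t]|yxC]; last by exists (tup2 y x); rewrite ?permtup_swap2.
by rewrite [t]tup2E permtup_swap2 => tC /tup2_inj[-> ->].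
Qed.

Lemma mem_rel_of_color (C : {set 2.-tuple V}) x y :
  ((x, y) \in rel_of_color C) = (tup2 x y \in C).
Proof.
apply/imsetP/idP => [[t tC [-> ->]]|xyC]; first by rewrite -tup2E.
by exists (tup2 x y).
Qed.

End Tuples.

Lemma regularity_card_restr (V : finType) (P : forall s, {set {set s.-tuple V}})
    k (u v : k.-tuple V) i (C : {set k.+1.-tuple V}) (p : pred (k.+1.-tuple V)) :
  regularity k P -> same_color (P k) u v -> C \in P k.+1 ->
  {in C &, forall t t', p t = p t'} ->
  #|[set t in C | (deltup t i == u) && p t]| = #|[set t in C | (deltup t i == v) && p t]|.
Proof. by move=> reg uv PC p_const; apply: card_restr_const p_const _; apply: reg. Qed.

Section ThreeScheme.
Variable V : finType.
Variable P : forall s, {set {set s.-tuple V}}.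
Hypothesis P_scheme : is_scheme 3 P.
Hypothesis P_homog : homogeneous P.

Let partP1 : partition (P 1) (dtuples V 1). Proof. by case: P_scheme => /(_ 1 isT). Qed.
Let partP2 : partition (P 2) (dtuples V 2). Proof. by case: P_scheme => /(_ 2 isT). Qed.
Let partP3 : partition (P 3) (dtuples V 3). Proof. by case: P_scheme => /(_ 3 isT). Qed.
Let reg1 : regularity 1 P. Proof. by case: P_scheme => _ /(_ 1 isT isT) []. Qed.
Let inv2 : invariance 2 P. Proof. by case: P_scheme => _ /(_ 1 isT isT) []. Qed.
Let comp2 : compatibility 2 P. Proof. by case: P_scheme => _ /(_ 2 isT isT) []. Qed.
Let reg2 : regularity 2 P. Proof. by case: P_scheme => _ /(_ 2 isT isT) []. Qed.

Definition scheme_rels : {set {set V * V}} := rel_of_color (V:=V) @: P 2 :|: [set id_rel V].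

Definition midpoints (Cf Cg : {set 2.-tuple V}) a b : {set V} :=
  [set c | (tup2 a c \in Cf) && (tup2 c b \in Cg)].

Lemma color_neq C x y : C \in P 2 -> tup2 x y \in C -> x != y.
Proof. by move=> PC xyC; rewrite -tup2_dtuple (subsetP (partitionS partP2 PC)). Qed.

Lemma homogeneous_same_color (u v : 1.-tuple V) : same_color (P 1) u v.
Proof.
have [Q P1E] := cards1P (introT eqP P_homog).
have inQ (w : 1.-tuple V) : w \in Q.
  have : w \in cover (P 1) by rewrite (cover_partition partP1) inE; case: w => -[|x []].
  by case/bigcupP => B; rewrite P1E inE => /eqP ->.
by apply: same_color_in (inQ u) (inQ v); rewrite P1E set11.
Qed.

Lemma id_rel_neq0 : id_rel V != set0.
Proof.
have [Q P1E] := cards1P (introT eqP P_homog).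
have /set0Pn[t _] : Q != set0 by apply: partition_neq0 partP1 _; rewrite P1E set11.
by apply/set0Pn; exists (tnth t ord0, tnth t ord0); rewrite inE.
Qed.

Lemma scheme_rels_partition : partition scheme_rels [set: V * V].
Proof.
apply/and3P; split.
- apply/eqP/setP => -[x y]; rewrite inE; apply/bigcupP.
  have [<-|xy] := eqVneq x y; first by exists (id_rel V); rewrite !inE ?eqxx ?orbT.
  have : tup2 x y \in cover (P 2) by rewrite (cover_partition partP2) tup2_dtuple.
  case/bigcupP => C PC xyC; exists (rel_of_color C); first by rewrite inE imset_f.
  by rewrite mem_rel_of_color.
- apply/trivIsetP => A B; rewrite !inE.
  move=> /orP[/imsetP[C PC ->]|/eqP->] /orP[/imsetP[C' PC' ->]|/eqP->] AB //;
    rewrite -setI_eq0; apply/eqP/setP => -[x y]; rewrite !inE ?mem_rel_of_color /=.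
  + apply/negP => /andP[xyC xyC']; move/negP: AB; apply.
    by rewrite (partition_block_eq partP2 PC PC' xyC xyC').
  + by apply/negP => /andP[/(color_neq PC)/negbTE ->].
  + by apply/negP => /andP[/eqP -> /(color_neq PC')/negP].
  + by rewrite eqxx in AB.
- rewrite !inE negb_or eq_sym id_rel_neq0 andbT.
  apply/imsetP => -[C PC C0].
  have /set0Pn[u uC] := partition_neq0 partP2 PC.
  have : (tnth u ord0, tnth u ord_max) \in rel_of_color C.
    by rewrite mem_rel_of_color -tup2E.
  by rewrite -C0 inE.
Qed.

Lemma scheme_rels_transpose g : g \in scheme_rels -> transpose_rel g \in scheme_rels.
Proof.
rewrite !inE => /orP[/imsetP[C PC ->]|/eqP->].
  apply/orP; left; apply/imsetP; exists (permtup swap2 @: C); first exact: inv2.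
  by apply/setP => -[x y]; rewrite !inE /= !mem_rel_of_color mem_permtup_swap2.
by apply/orP; right; apply/eqP/setP => -[x y]; rewrite !inE /= eq_sym.
Qed.

Lemma card_midpoints_diag Cf Cg a : Cg \in P 2 ->
  #|midpoints Cf Cg a a| =
  #|[set u in Cf | (deltup u ord_max == [tuple a]) && (u \in permtup swap2 @: Cg)]|.
Proof.
move=> PCg; have inj : injective (tup2 a) by move=> c c' /tup2_inj[].
rewrite -(card_imset _ inj); apply: eq_card => u; rewrite inE.
apply/imsetP/idP => [[c]|/and3P[uCf /eqP ua uCg]].
  by rewrite !inE => /andP[acf cag] ->; rewrite acf deltup2_1 eqxx mem_permtup_swap2.
rewrite [u]tup2E deltup2_1 in ua uCf uCg *; move/tuple1_inj: ua => <-.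
by exists (tnth u ord_max); rewrite // inE uCf -mem_permtup_swap2.
Qed.

Lemma intersection_number_diag Cf Cg a a' : Cf \in P 2 -> Cg \in P 2 ->
  #|midpoints Cf Cg a a| = #|midpoints Cf Cg a' a'|.
Proof.
move=> PCf PCg; rewrite !card_midpoints_diag //.
apply: (regularity_card_restr ord_max (p := fun u => u \in permtup swap2 @: Cg) reg1
         (homogeneous_same_color _ _) PCf) => u u' uCf u'Cf.
apply: same_color_mem partP2 (inv2 PCg swap2) _.
exact: same_color_in PCf uCf u'Cf.
Qed.

Lemma card_midpoints_sum Cf Cg a b : Cf \in P 2 -> Cg \in P 2 -> a != b ->
  #|midpoints Cf Cg a b| =
  \sum_(T in P 3) #|[set t in T | (deltup t (inord 1) == tup2 a b) &&
                       ((deltup t ord_max \in Cf) && (deltup t ord0 \in Cg))]|.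
Proof.
move=> PCf PCg ab.
set S := [set t in dtuples V 3 | (deltup t (inord 1) == tup2 a b) &&
           ((deltup t ord_max \in Cf) && (deltup t ord0 \in Cg))].
have inj : injective (fun c => tup3 a c b) by move=> c c' /(congr1 val) [].
transitivity #|S|.
  rewrite -(card_imset _ inj); apply: eq_card => t; rewrite inE.
  apply/imsetP/idP => [[c]|/and3P[_ /eqP tab /andP[tCf tCg]]].
    rewrite !inE => /andP[acf cbg] ->; rewrite deltup3_0 deltup3_1 deltup3_2 acf cbg eqxx.
    by rewrite !andbT tup3_uniq ab (color_neq PCf acf) (color_neq PCg cbg).
  have [x [m [y tE]]] := tup3P t.
  move: tab tCf tCg; rewrite tE deltup3_0 deltup3_1 deltup3_2 => /tup2_inj[-> ->] amf mbg.
  by exists m; rewrite // inE amf mbg.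
rewrite (card_partition_setI partP3); last by apply/subsetP => t; rewrite inE => /andP[].
apply: eq_bigr => T PT; apply: eq_card => t; rewrite !inE.
case tT: (t \in T); rewrite ?andbF // andbT.
by have := subsetP (partitionS partP3 PT) t tT; rewrite inE => ->.
Qed.

Lemma intersection_number_color Cf Cg Ch a b a' b' :
    Cf \in P 2 -> Cg \in P 2 -> Ch \in P 2 -> tup2 a b \in Ch -> tup2 a' b' \in Ch ->
  #|midpoints Cf Cg a b| = #|midpoints Cf Cg a' b'|.
Proof.
move=> PCf PCg PCh abh abh'.
rewrite !card_midpoints_sum ?(color_neq PCh abh) ?(color_neq PCh abh') //.
apply: eq_bigr => T PT.
apply: (regularity_card_restr (inord 1)
         (p := fun t => (deltup t ord_max \in Cf) && (deltup t ord0 \in Cg))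
         reg2 (same_color_in PCh abh abh') PT) => t t' tT t'T.
have tt' := same_color_in PT tT t'T.
by rewrite (same_color_mem partP2 PCf (comp2 tt' ord_max))
           (same_color_mem partP2 PCg (comp2 tt' ord0)).
Qed.

Lemma scheme_rels_intersection_numbers f g h :
    f \in scheme_rels -> g \in scheme_rels -> h \in scheme_rels ->
  forall a b a' b', (a, b) \in h -> (a', b') \in h ->
  #|[set c | ((a, c) \in f) && ((c, b) \in g)]| =
  #|[set c | ((a', c) \in f) && ((c, b') \in g)]|.
Proof.
move=> Gf Gg Gh a b a' b' abh abh'.
have abab' := same_color_in Gh abh abh'.
move: Gf; rewrite !inE => /orP[/imsetP[Cf PCf ->]|/eqP->]; last first.
  by rewrite !card_comp_id_rel_l (same_color_mem scheme_rels_partition Gg abab').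
move: Gg; rewrite !inE => /orP[/imsetP[Cg PCg ->]|/eqP->]; last first.
  by rewrite !card_comp_id_rel_r (same_color_mem scheme_rels_partition _ abab') // inE imset_f.
under eq_finset => c do rewrite !mem_rel_of_color.
under [in RHS]eq_finset => c do rewrite !mem_rel_of_color.
rewrite -!/(midpoints _ _ _ _).
move: Gh abh abh'; rewrite !inE => /orP[/imsetP[Ch PCh ->]|/eqP->].
  by rewrite !mem_rel_of_color; apply: intersection_number_color.
by rewrite !inE => /eqP/= <- /eqP/= <-; apply: intersection_number_diag.
Qed.

Lemma scheme_rels_assoc : is_association_scheme scheme_rels.
Proof.
split; [exact: scheme_rels_partition | by rewrite !inE eqxx orbT |
        exact: scheme_rels_transpose | exact: scheme_rels_intersection_numbers].
Qed.

End ThreeScheme.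

Theorem lemma2p3 (V : finType) (P : forall s, {set {set s.-tuple V}}) :
  is_scheme 3 P -> homogeneous P ->
  is_association_scheme
    ((@rel_of_color V) @: P 2 :|: [set id_rel V]).
Proof. exact: scheme_rels_assoc. Qed.
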